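(* Let $A,B\in\mathbb{C}^{n\times n}$ be nonzero matrices. If $\theta(A)+\theta(B)<\pi$, then $\det(I+BA)\neq0$.
   Context: For a nonzero $A\in\mathbb{C}^{n\times n}$, its singular angle $\theta(A)\in[0,\pi]$ is defined by $\cos\theta(A)=\inf\{\mathrm{Re}(x^*Ax)/(|x|\,|Ax|): 0\ne x\in\mathbb{C}^n,\ Ax\neq0\}$, where $|\cdot|$ is the Euclidean norm. *)

From HB Require Import structures.
From mathcomp Require Import all_boot all_order all_algebra.
From mathcomp Require Import all_classical all_reals all_analysis.
From mathcomp Require Import complex.
Set Implicit Arguments. Unset Strict Implicit. Unset Printing Implicit Defensive.
Import Order.TTheory GRing.Theory Num.Theory.
Local Open Scope ring_scope.
Local Open Scope classical_set_scope.

Section SingularAngle.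
Variable R : realType.
Local Notation C := (R[i]).

Definition cdot (n : nat) (x y : 'cV[C]_n) : C :=
  \sum_(i < n) conjc (x i 0) * y i 0.

Definition vnorm (n : nat) (x : 'cV[C]_n) : R := Num.sqrt (complex.Re (cdot x x)).

Definition sratio (n : nat) (A : 'M[C]_n) (x : 'cV[C]_n) : R :=
  complex.Re (cdot x (A *m x)) / (vnorm x * vnorm (A *m x)).

Definition cos_sangle (n : nat) (A : 'M[C]_n) : R :=
  inf [set sratio A x | x in [set x : 'cV[C]_n | x != 0 /\ A *m x != 0]].

Definition sangle (n : nat) (A : 'M[C]_n) : R := acos (cos_sangle A).

End SingularAngle.

From HB Require Import structures.
From mathcomp Require Import all_boot all_order all_algebra.
From mathcomp Require Import all_classical all_reals all_analysis.
From mathcomp Require Import complex.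
From mathcomp Require Import ring lra.
Import Order.TTheory GRing.Theory Num.Theory.
Local Open Scope ring_scope.
Set Implicit Arguments. Unset Strict Implicit.

(* If det(I + BA) = 0, pick x <> 0 with BAx = -x and put y = Ax, which is
   nonzero. Then Re(y^* B y) = -Re(y^* x) = -Re(x^* A x) and |By| = |x|, so
   the ratios defining cos theta(A) at x and cos theta(B) at y are opposite,
   whence cos theta(A) + cos theta(B) <= 0. As acos is decreasing on [-1, 1]
   and acos(-t) = pi - acos t, this means theta(A) + theta(B) >= pi. *)

Section RealInnerProduct.
Variable R : realType.
Local Notation C := R[i].

Definition rdot (n : nat) (x y : 'cV[C]_n) : R :=
  \sum_(i < n) (complex.Re (x i 0) * complex.Re (y i 0)
                + complex.Im (x i 0) * complex.Im (y i 0)).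

Variable n : nat.
Implicit Types x y : 'cV[C]_n.

Lemma Re_cdot x y : complex.Re (cdot x y) = rdot x y.
Proof.
rewrite /cdot /rdot; elim/big_rec2: _ => [//|i a b _ <-].
by case: (x i 0) => p q; case: (y i 0) => r s; case: b => u v /=; rewrite mulNr opprK.
Qed.

Lemma rdotC x y : rdot x y = rdot y x.
Proof. by apply: eq_bigr => i _; rewrite mulrC [complex.Im _ * _]mulrC. Qed.

Lemma rdotNr x y : rdot x (- y) = - rdot x y.
Proof.
rewrite /rdot -sumrN; apply: eq_bigr => i _; rewrite mxE.
by case: (y i 0) => p q /=; rewrite opprD !mulrN.
Qed.

Lemma rdotNl x y : rdot (- x) y = - rdot x y.
Proof. by rewrite rdotC rdotNr rdotC. Qed.

Lemma rdot0l y : rdot 0 y = 0.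
Proof. by apply: big1 => i _; rewrite mxE /= !mul0r addr0. Qed.

Lemma rdot_ge0 x : 0 <= rdot x x.
Proof. by apply: sumr_ge0 => i _; rewrite -!expr2 addr_ge0 ?sqr_ge0. Qed.

Lemma rdot_gt0 x : x != 0 -> 0 < rdot x x.
Proof.
apply: contraNT; rewrite -leNgt => rdot_le0; apply/eqP/matrixP => i j.
have/eqP: rdot x x = 0 by apply/eqP; rewrite eq_le rdot_le0 rdot_ge0.
rewrite psumr_eq0 => [/allP/(_ i (mem_index_enum _))|k _]; last first.
  by rewrite -!expr2 addr_ge0 ?sqr_ge0.
rewrite (ord1 j) mxE implyTb -!expr2 paddr_eq0 ?sqr_ge0 // !sqrf_eq0.
by case: (x i 0) => p q /andP[/eqP /= -> /eqP ->].
Qed.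

Lemma vnormE x : vnorm x = Num.sqrt (rdot x x).
Proof. by rewrite /vnorm Re_cdot. Qed.

Lemma vnorm_sqr x : vnorm x ^+ 2 = rdot x x.
Proof. by rewrite vnormE sqr_sqrtr ?rdot_ge0. Qed.

Lemma vnorm_ge0 x : 0 <= vnorm x.
Proof. by rewrite vnormE sqrtr_ge0. Qed.

Lemma vnorm_gt0 x : x != 0 -> 0 < vnorm x.
Proof. by move=> x_neq0; rewrite vnormE sqrtr_gt0 rdot_gt0. Qed.

Lemma vnorm0 : vnorm (0 : 'cV[C]_n) = 0.
Proof. by rewrite vnormE rdot0l sqrtr0. Qed.

Lemma vnormN x : vnorm (- x) = vnorm x.
Proof. by rewrite !vnormE rdotNr rdotNl opprK. Qed.

Lemma rdot_ge_Nvnorm x y : - (vnorm x * vnorm y) <= rdot x y.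
Proof.
have [->|x_neq0] := eqVneq x 0; first by rewrite vnorm0 rdot0l mul0r oppr0.
have [->|y_neq0] := eqVneq y 0; first by rewrite vnorm0 rdotC rdot0l mulr0 oppr0.
set a := vnorm x; set b := vnorm y.
have ab_gt0 : 0 < 2 * a * b by rewrite -mulrA mulr_gt0 ?ltr0n ?mulr_gt0 ?vnorm_gt0.
have expand : \sum_(i < n) ((b * complex.Re (x i 0) + a * complex.Re (y i 0)) ^+ 2
    + (b * complex.Im (x i 0) + a * complex.Im (y i 0)) ^+ 2)
    = b ^+ 2 * rdot x x + a ^+ 2 * rdot y y + 2 * a * b * rdot x y.
  by rewrite /rdot !mulr_sumr -!big_split /=; apply: eq_bigr => i _; ring.
(* 2ab (ab + x.y) = |b x + a y|^2 in the real inner product *)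
have : 0 <= 2 * a * b * (a * b + rdot x y).
  have -> : 2 * a * b * (a * b + rdot x y)
          = b ^+ 2 * a ^+ 2 + a ^+ 2 * b ^+ 2 + 2 * a * b * rdot x y by ring.
  rewrite -!vnorm_sqr -/a -/b in expand; rewrite -expand.
  by apply: sumr_ge0 => i _; rewrite addr_ge0 ?sqr_ge0.
by rewrite pmulr_rge0 //; lra.
Qed.

End RealInnerProduct.

Section SingularAngleBounds.
Variables (R : realType) (n : nat).
Implicit Types (A B : 'M[R[i]]_n) (x : 'cV[R[i]]_n).

Lemma sratio_geN1 A x : -1 <= sratio A x.
Proof.
rewrite /sratio Re_cdot.
have [->|nx_neq0] := eqVneq (vnorm x * vnorm (A *m x)) 0.
  by rewrite invr0 mulr0 lerN10.
have nx_gt0 : 0 < vnorm x * vnorm (A *m x).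
  by rewrite lt_def nx_neq0 mulr_ge0 ?vnorm_ge0.
by rewrite ler_pdivlMr // mulN1r rdot_ge_Nvnorm.
Qed.

Lemma cos_sangle_le_sratio A x : x != 0 -> A *m x != 0 -> cos_sangle A <= sratio A x.
Proof.
move=> x_neq0 Ax_neq0; apply: ge_inf; last by exists x.
by exists (-1) => _ [z _ <-]; exact: sratio_geN1.
Qed.

(* When the defining set is empty, [inf] returns 0. *)
Lemma cos_sangle_geN1 A : -1 <= cos_sangle A.
Proof.
rewrite /cos_sangle; set S := (X in inf X).
have [->|/set0P[s Ss]] := eqVneq S set0; first by rewrite inf0 lerN10.
by apply: lb_le_inf; [exists s | move=> _ [z _ <-]; exact: sratio_geN1].
Qed.

Lemma sratio_opp A B x :
  B *m (A *m x) = - x -> sratio B (A *m x) = - sratio A x.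
Proof.
move=> BAx; rewrite /sratio BAx vnormN !Re_cdot rdotNr rdotC.
by rewrite mulNr [vnorm (A *m x) * _]mulrC.
Qed.

Lemma det0_col_kernel (F : fieldType) (M : 'M[F]_n) :
  \det M = 0 -> exists2 x : 'cV[F]_n, x != 0 & M *m x = 0.
Proof.
move=> detM0; have/det0P[v v_neq0 vMt0] : \det M^T == 0 by rewrite det_tr detM0.
exists v^T; first by rewrite -trmx0 (inj_eq trmx_inj).
by apply: trmx_inj; rewrite trmx_mul trmxK vMt0 trmx0.
Qed.

Lemma cos_sangle_add_le0 A B :
  \det (1%:M + B *m A) = 0 -> cos_sangle A + cos_sangle B <= 0.
Proof.
case/det0_col_kernel => x x_neq0; rewrite mulmxDl mul1mx -mulmxA.
move/eqP; rewrite addrC addr_eq0 => /eqP BAx.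
have Ax_neq0 : A *m x != 0.
  by apply: contra_neq x_neq0 => Ax0; rewrite -[x]opprK -BAx Ax0 mulmx0 oppr0.
have BAx_neq0 : B *m (A *m x) != 0 by rewrite BAx oppr_eq0.
have := cos_sangle_le_sratio x_neq0 Ax_neq0.
have := cos_sangle_le_sratio Ax_neq0 BAx_neq0.
rewrite sratio_opp //; lra.
Qed.

End SingularAngleBounds.

Lemma ler_acos (R : realType) (s t : R) :
  -1 <= s <= 1 -> -1 <= t <= 1 -> s <= t -> acos t <= acos s.
Proof.
move=> s_itv t_itv; apply: contraTT; rewrite -!ltNge => lt_acos.
have acos_itv (u : R) : -1 <= u <= 1 -> acos u \in `[0, pi].
  by move=> u_itv; rewrite in_itv /= acos_ge0 ?acos_lepi.
by rewrite -[s]acosK ?in_itv // -[t]acosK ?in_itv // ltr_cos ?acos_itv.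
Qed.

Lemma pi_le_acos_add (R : realType) (a b : R) :
  -1 <= a -> -1 <= b -> a + b <= 0 -> pi <= acos a + acos b.
Proof.
move=> a_geN1 b_geN1 ab_le0.
have b_itv : -1 <= b <= 1 by apply/andP; split; lra.
have : acos (- b) <= acos a.
  by apply: ler_acos; [apply/andP; split; lra | apply/andP; split; lra | lra].
by rewrite acosN //; lra.
Qed.

Theorem theorem2 (R : realType) (n : nat) (A B : 'M[R[i]]_n) :
  A != 0 -> B != 0 -> sangle A + sangle B < pi ->
  \det (1%:M + B *m A) != 0.
Proof.
move=> _ _; apply: contraTneq => /cos_sangle_add_le0 cos_sum_le0.
by rewrite -leNgt pi_le_acos_add ?cos_sangle_geN1.
Qed.
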